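(* Let $N$ be a positive integer, $L>0$, and $\zeta=(\zeta_0,\dots,\zeta_{N+2})\in\mathbb{R}^{N+3}$ with $\zeta_0>\zeta_1>\dots>\zeta_{N+1}>\zeta_{N+2}=0$. With $x_i,g_i,f_i$ and $W^\zeta$ as defined in the context, the function $W^\zeta:\mathbb{R}^{N+1}\to\mathbb{R}$ is convex and has a Lipschitz-continuous gradient with constant $L$, and $W^\zeta(x_i)=f_i$, $\nabla W^\zeta(x_i)=g_i$ for all $i\in\{0,\dots,N+1\}$.
   Context: Let $e_0,\dots,e_N$ denote the standard unit vectors of $\mathbb{R}^{N+1}$ (zero-based indexing). Define for $i=0,\dots,N+1$: $x_i=-\sum_{j=0}^{i-1}\frac{\zeta_j-\zeta_{i+1}}{\sqrt{\zeta_j-\zeta_{j+1}}}e_j\in\mathbb{R}^{N+1}$; $g_i=L\sqrt{\zeta_i-\zeta_{i+1}}\,e_i$ for $i=0,\dots,N$ and $g_{N+1}=0$; $f_i=\frac L2(\zeta_i+\zeta_{i+1})$ for $i=0,\dots,N$ and $f_{N+1}=0$. For $y\in\mathbb{R}^{N+1}$, $\nu\in\mathbb{R}^{N+1}$, $\alpha=(\alpha_0,\dots,\alpha_{N+1})\in\mathbb{R}^{N+2}$ let $w^\zeta(y,\nu,\alpha)=\frac L2\|y+\nu-\sum_{i=0}^{N+1}\alpha_i(x_i-\frac1Lg_i)\|^2+\sum_{i=0}^{N+1}\alpha_i(f_i-\frac1{2L}\|g_i\|^2)$, and $W^\zeta(y)=\min\{w^\zeta(y,\nu,\alpha):\nu\in\mathbb{R}^{N+1}_+,\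 \alpha\in\Delta_{N+2}\}$, where $\mathbb{R}^{N+1}_+$ is the nonnegative orthant and $\Delta_{N+2}=\{\alpha\in\mathbb{R}^{N+2}:\alpha_i\geq0,\ \sum_i\alpha_i=1\}$. *)

From HB Require Import structures.
From mathcomp Require Import all_boot all_order all_algebra.
From mathcomp Require Import all_classical all_reals all_analysis.
Set Implicit Arguments. Unset Strict Implicit. Unset Printing Implicit Defensive.
Import Order.TTheory GRing.Theory Num.Theory.
Import numFieldNormedType.Exports.
Local Open Scope classical_set_scope.
Local Open Scope ring_scope.

Section Defs.
Variable R : realType.

Definition dotv (n : nat) (u v : 'rV[R]_n) : R := \sum_(j < n) u 0 j * v 0 j.
Definition enorm (n : nat) (u : 'rV[R]_n) : R := Num.sqrt (dotv u u).

(* x_i, g_i, f_i for i = 0..N+1; zeta : nat -> R gives zeta_0..zeta_{N+2} *)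
Definition xpt (N : nat) (zeta : nat -> R) (i : nat) : 'rV[R]_N.+1 :=
  \row_(j < N.+1) (if (j < i)%N then
       - ((zeta j - zeta i.+1) / Num.sqrt (zeta j - zeta j.+1)) else 0).

Definition gpt (N : nat) (L : R) (zeta : nat -> R) (i : nat) : 'rV[R]_N.+1 :=
  \row_(j < N.+1) (if (i <= N)%N && (j == i :> nat)
                   then L * Num.sqrt (zeta i - zeta i.+1) else 0).

Definition fval (N : nat) (L : R) (zeta : nat -> R) (i : nat) : R :=
  if (i <= N)%N then L / 2 * (zeta i + zeta i.+1) else 0.

Definition wfun (N : nat) (L : R) (zeta : nat -> R)
    (y nu : 'rV[R]_N.+1) (alpha : 'rV[R]_N.+2) : R :=
  let v := y + nu - \sum_(i < N.+2) alpha 0 i *: (xpt N zeta i - L^-1 *: gpt N L zeta i) in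
  L / 2 * dotv v v
  + \sum_(i < N.+2) alpha 0 i * (fval N L zeta i - (2 * L)^-1 * dotv (gpt N L zeta i) (gpt N L zeta i)).

Definition nonneg_orthant (n : nat) : set 'rV[R]_n := [set nu | forall j, 0 <= nu 0 j].
Definition simplex (n : nat) : set 'rV[R]_n :=
  [set a | (forall i, 0 <= a 0 i) /\ \sum_(i < n) a 0 i = 1].

(* W^zeta(y) = min over the feasible set; rendered as the infimum of the values
   (the minimum is attained, so min = inf). *)
Definition Wfun (N : nat) (L : R) (zeta : nat -> R) (y : 'rV[R]_N.+1) : R :=
  inf [set wfun L zeta y nu alpha | nu in @nonneg_orthant N.+1 & alpha in @simplex N.+2].

Definition is_gradient (n : nat) (F : 'rV[R]_n.+1 -> R) (y g : 'rV[R]_n.+1) : Prop :=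
  differentiable F y /\ forall h, 'd F y h = dotv g h.

Definition convexf (n : nat) (F : 'rV[R]_n -> R) : Prop :=
  forall (y z : 'rV[R]_n) (t : R), 0 <= t -> t <= 1 ->
    F (t *: y + (1 - t) *: z) <= t * F y + (1 - t) * F z.

End Defs.

From HB Require Import structures.
From mathcomp Require Import all_boot all_order all_algebra.
From mathcomp Require Import all_classical all_reals all_analysis.
From mathcomp Require Import ring lra zify.
Set Implicit Arguments. Unset Strict Implicit. Unset Printing Implicit Defensive.
Import Order.TTheory GRing.Theory Num.Theory.
Import numFieldNormedType.Exports.
Local Open Scope classical_set_scope.
Local Open Scope ring_scope.

(* For fixed [y], [W y] is the value of a convex quadratic program in [(nu, alpha)]
   whose objective [L/2 |v|^2 + sum_i alpha_i c_i] sees [y] only through the residual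
   [v = y + nu - sum_i alpha_i q_i], with [q_i = x_i - g_i / L] and
   [c_i = f_i - |g_i|^2 / (2 L)].  For fixed [alpha] the optimal [nu] is explicit, which
   leaves a continuous function on the compact simplex, so minimizers exist; strict
   convexity in [v] makes the optimal residual unique, and [G y := L v].
   First-order optimality at [y] gives [W z >= W y + <G y, z - y>], and keeping the
   minimizer of [y] at [z] gives [W z <= W y + <G y, z - y> + L/2 |z - y|^2].  These two
   bounds alone imply convexity, differentiability with gradient [G] and, through
   cocoercivity, the [L]-Lipschitz bound on [G].  At [x_i] the vertex [alpha = e_i],
   [nu = 0] is optimal: the interpolation inequalities
   [f_j >= f_i + <g_i, x_j - x_i> + |g_j - g_i|^2 / (2 L)], which the data satisfy
   because [zeta] decreases to [0], together with [g_i >= 0] form a dual certificate. *)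

Section DotProduct.
Variables (R : realType) (n : nat).
Implicit Types (u v w : 'rV[R]_n) (k : R).

Lemma dotvC u v : dotv u v = dotv v u.
Proof. by apply: eq_bigr => j _; rewrite mulrC. Qed.

Lemma dotv_is_linear u : linear (dotv u).
Proof.
move=> k v w; rewrite /dotv scaler_sumr -big_split; apply: eq_bigr => j _.
by rewrite !mxE mulrDr mulrCA.
Qed.

HB.instance Definition _ u :=
  GRing.isLinear.Build R 'rV[R]_n R *:%R (dotv u) (dotv_is_linear u).

Lemma dotvZr u k v : dotv u (k *: v) = k * dotv u v.
Proof. exact: linearZ. Qed.

Lemma dotvZl k u v : dotv (k *: u) v = k * dotv u v.
Proof. by rewrite dotvC dotvZr dotvC. Qed.

Lemma dotvBl u v w : dotv (u - v) w = dotv u w - dotv v w.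
Proof. by rewrite dotvC linearB /= !(dotvC w). Qed.

Lemma dotvNN u : dotv (- u) (- u) = dotv u u.
Proof. by rewrite linearN /= dotvC linearN /= opprK. Qed.

Lemma dotvDD u v : dotv (u + v) (u + v) = dotv u u + 2 * dotv u v + dotv v v.
Proof. by rewrite linearD /= ![dotv (u + v) _]dotvC !linearD /= (dotvC v u); ring. Qed.

Lemma dotvBB u v : dotv (u - v) (u - v) = dotv u u - 2 * dotv u v + dotv v v.
Proof. by rewrite dotvDD !linearN /= [dotv (- v) v]dotvC linearN /=; ring. Qed.

Lemma dotvv_ge0 u : 0 <= dotv u u.
Proof. by apply: sumr_ge0 => j _; rewrite -expr2 sqr_ge0. Qed.

Lemma dotvv_eq0 u : dotv u u = 0 -> u = 0.
Proof.
move=> /psumr_eq0P u0; apply/rowP => j; rewrite mxE.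
have /eqP : u 0 j * u 0 j = 0 by apply: u0 => // i _; rewrite -expr2 sqr_ge0.
by rewrite mulf_eq0 orbb => /eqP.
Qed.

Lemma dotv_le_quadratic (L : R) w v : 0 < L ->
  dotv w v - dotv w w / (2 * L) <= L / 2 * dotv v v.
Proof.
move=> L_gt0; have := dotvv_ge0 (L *: v - w).
rewrite dotvBB !dotvZl dotvZr (dotvC v w) => sq_ge0; rewrite -subr_ge0.
have -> : L / 2 * dotv v v - (dotv w v - dotv w w / (2 * L)) =
    (L * (L * dotv v v) - 2 * (L * dotv w v) + dotv w w) / (2 * L).
  by field; rewrite gt_eqF.
by apply: divr_ge0 => //; lra.
Qed.

Lemma continuous_dotv u : continuous (dotv u).
Proof.
apply: continuous_big => [|j _]; first exact: add_continuous.
by move=> x; apply: continuousM; [exact: cst_continuous | exact: coord_continuous].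
Qed.

Lemma dotvv_le_norm u : dotv u u <= n%:R * `|u| ^+ 2.
Proof.
apply: (@le_trans _ _ (\sum_(j < n) `|u| ^+ 2)); last first.
  by rewrite sumr_const card_ord mulr_natl.
apply: ler_sum => j _.
have coord_le : `|u 0 j| <= `|u|.
  by change `|u| with (mx_norm u); rewrite mx_normrE; apply/bigmax_geP; right; exists (0, j).
by rewrite -expr2 -real_normK ?num_real // lerXn2r ?nnegrE.
Qed.

End DotProduct.

Section SimplexMinimum.
Variables (R : realType) (m : nat).

Lemma simplex_closed : closed (@simplex R m).
Proof.
have -> : @simplex R m =
    (\bigcap_(i in setT) ((fun a : 'rV[R]_m => a 0 i) @^-1` [set x | 0 <= x]))
    `&` ((fun a : 'rV[R]_m => \sum_(i < m) a 0 i) @^-1` [set x | x = 1]).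
  apply/seteqP; split => a /= [a_ge0 a_sum]; split => // i;
    [move=> _; exact: a_ge0 | exact: a_ge0].
apply: closedI.
  apply: closed_bigI => i _; apply: preimage_closed; last exact: closed_ge.
  by move=> a _; exact: coord_continuous.
apply: preimage_closed; last exact: closed_eq.
move=> a _; apply: continuous_big => [|i _]; [exact: add_continuous | exact: coord_continuous].
Qed.

Lemma simplex_compact : compact (@simplex R m).
Proof.
apply: (subclosed_compact simplex_closed
  (@rV_compact _ m (fun=> `[(0 : R), 1]%classic) (fun=> @segment_compact _ 0 1))).
move=> a [a_ge0 a_sum] i /=; have -> : ord0 = 0 :> 'I_1 by exact: val_inj.
rewrite in_itv /= a_ge0 /= -a_sum.
by rewrite (bigD1 i) //= lerDl; apply: sumr_ge0 => j _; exact: a_ge0.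
Qed.

Lemma simplex_delta (k : 'I_m) : @simplex R m (delta_mx 0 k).
Proof.
split; first by move=> i; rewrite mxE ler0n.
rewrite (bigD1 k) //= big1 => [|i ik]; rewrite mxE !eqxx /=.
  by rewrite addr0.
by rewrite (negbTE ik).
Qed.

End SimplexMinimum.

Lemma simplex_argmin (R : realType) (m : nat) (F : 'rV[R]_m.+1 -> R) :
  continuous F -> exists2 a, simplex a & forall b, simplex b -> F a <= F b.
Proof.
move=> F_cont; have simplex_neq0 : @simplex R m.+1 !=set0.
  by exists (delta_mx 0 ord0); exact: simplex_delta.
have [a a_in a_min] := compact_EVT_min simplex_neq0 (@simplex_compact R m.+1)
  (continuous_subspaceT F_cont).
by exists a => [|b b_in]; [rewrite inE in a_in | apply: a_min; rewrite inE].
Qed.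

Lemma first_order_ge0 (R : realFieldType) (B K : R) : 0 <= K ->
  (forall t, 0 < t -> t <= 1 -> 0 <= t * B + t ^+ 2 * K) -> 0 <= B.
Proof.
move=> K_ge0 H; rewrite leNgt; apply/negP => B_lt0.
have KB_gt0 : 0 < K - B by lra.
pose t := - B / (K - B).
have tKB : t * (K - B) = - B by rewrite /t divfK // gt_eqF.
have t_gt0 : 0 < t by rewrite /t divr_gt0 // oppr_gt0.
have t_le1 : t <= 1 by rewrite /t ler_pdivrMr // mul1r; lra.
have := H t t_gt0 t_le1.
have -> : t * B + t ^+ 2 * K = t ^+ 2 * B + t * (B + t * (K - B)) by ring.
by rewrite tKB addrN mulr0 addr0 pmulr_rge0 ?exprn_gt0 //; lra.
Qed.

Lemma is_gradient_of_quadratic_bound (R : realType) (n : nat)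
    (F : 'rV[R]_n.+1 -> R) (y g : 'rV[R]_n.+1) (K : R) : 0 <= K ->
  (forall h, `|F (h + y) - F y - dotv g h| <= K * dotv h h) -> is_gradient F y g.
Proof.
move=> K_ge0 F_bound.
have F_diff : F \o shift y = cst (F y) + dotv g +o_ (0 : 'rV[R]_n.+1) id.
  apply/eqaddoP => e e_gt0; set K' := K * n.+1%:R + 1.
  have K'_gt0 : 0 < K' by rewrite /K'; have := mulr_ge0 K_ge0 (ler0n R n.+1); lra.
  apply: filterS (nbhs0_lt (divr_gt0 e_gt0 K'_gt0)) => h h_small /=.
  have -> : (F \o shift y - (cst (F y) + dotv g)) h = F (h + y) - F y - dotv g h.
    by rewrite /= opprD addrA.
  apply: (le_trans (F_bound h)).
  have : `|h| * K' < e by rewrite -ltr_pdivlMr.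
  have := ler_wpM2l K_ge0 (dotvv_le_norm h); have := normr_ge0 h.
  rewrite /K'; nra.
have dF := diff_unique (continuous_dotv (u := g)) F_diff.
split; last by move=> h; rewrite dF.
by apply/diff_locallyP; rewrite dF; split => //; exact: continuous_dotv.
Qed.

Section SmoothSandwich.
Variables (R : realType) (n : nat) (L : R).
Variables (F : 'rV[R]_n.+1 -> R) (G : 'rV[R]_n.+1 -> 'rV[R]_n.+1).
Hypothesis L_gt0 : 0 < L.
Hypothesis F_lower : forall y z, F y + dotv (G y) (z - y) <= F z.
Hypothesis F_upper : forall y z,
  F z <= F y + dotv (G y) (z - y) + L / 2 * dotv (z - y) (z - y).

Lemma convexf_of_lower : convexf F.
Proof.
move=> y z t t_ge0 t_le1; set u := t *: y + (1 - t) *: z.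
have G_balanced : t * dotv (G u) (y - u) + (1 - t) * dotv (G u) (z - u) = 0.
  rewrite -!dotvZr -linearD /=.
  have -> : t *: (y - u) + (1 - t) *: (z - u) = 0 by apply/rowP => j; rewrite !mxE; ring.
  exact: linear0.
have s_ge0 : 0 <= 1 - t by lra.
have := ler_wpM2l t_ge0 (F_lower u y); have := ler_wpM2l s_ge0 (F_lower u z).
nra.
Qed.

Lemma cocoercive_of_bounds y z :
  dotv (G y - G z) (G y - G z) / (2 * L) <= F y - F z - dotv (G z) (y - z).
Proof.
(* Test both bounds at [p], the gradient step of length [1/L] along [G y - G z]. *)
set d := G y - G z; set p := y - L^-1 *: d.
have := F_lower z p; have := F_upper y p.
have -> : p - z = (y - z) - L^-1 *: d by apply/rowP => j; rewrite !mxE; ring.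
have -> : p - y = - (L^-1 *: d) by apply/rowP => j; rewrite !mxE; ring.
rewrite [dotv (G z) _]linearB [dotv (G y) _]linearN /= dotvNN dotvZl !dotvZr.
have -> : dotv (G y) d = dotv (G z) d + dotv d d by rewrite /d dotvBl; ring.
have -> : L / 2 * (L^-1 * (L^-1 * dotv d d)) = dotv d d / (2 * L).
  by field; rewrite gt_eqF.
have -> : L^-1 * (dotv (G z) d + dotv d d) = L^-1 * dotv (G z) d + 2 * (dotv d d / (2 * L)).
  by field; rewrite gt_eqF.
lra.
Qed.

Lemma lipschitz_of_bounds y z : enorm (G y - G z) <= L * enorm (y - z).
Proof.
set d := G y - G z; set e := y - z.
have c1 := cocoercive_of_bounds y z; have c2 := cocoercive_of_bounds z y.
rewrite -/d -/e in c1.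
rewrite -(opprB (G y)) -(opprB y) -/d -/e dotvNN linearN /= in c2.
have de : dotv d e = dotv (G y) e - dotv (G z) e by rewrite dotvBl.
have dd_le_de : dotv d d <= L * dotv d e.
  have -> : dotv d d = L * (2 * (dotv d d / (2 * L))) by field; rewrite gt_eqF.
  by rewrite ler_pM2l //; lra.
have := dotvv_ge0 (d - L *: e); rewrite dotvBB dotvZr dotvZl dotvZr => sq_ge0.
have dd_le : dotv d d <= L ^+ 2 * dotv e e by nra.
rewrite /enorm -[L]gtr0_norm // -sqrtr_sqr -sqrtrM ?sqr_ge0 //.
by rewrite ler_sqrt // mulr_ge0 ?sqr_ge0 ?dotvv_ge0.
Qed.

Lemma gradient_of_bounds y : is_gradient F y (G y).
Proof.
have L2_ge0 : 0 <= L / 2 by rewrite divr_ge0 // ltW.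
apply: (is_gradient_of_quadratic_bound L2_ge0) => h.
have := F_lower y (h + y); have := F_upper y (h + y); rewrite addrK => up lo.
have q_ge0 := mulr_ge0 L2_ge0 (dotvv_ge0 h).
by rewrite ler_norml; apply/andP; split; lra.
Qed.

End SmoothSandwich.

Section QuadraticProgram.
Variables (R : realType) (n m : nat) (L : R).
Variables (q : 'I_m.+1 -> 'rV[R]_n.+1) (c : 'I_m.+1 -> R).
Hypothesis L_gt0 : 0 < L.
Implicit Types (y z nu : 'rV[R]_n.+1) (a : 'rV[R]_m.+1).

Definition comb a := \sum_(i < m.+1) a 0 i *: q i.
Definition cost a := \sum_(i < m.+1) a 0 i * c i.
Definition resid y nu a := y + nu - comb a.
Definition obj y nu a := L / 2 * dotv (resid y nu a) (resid y nu a) + cost a.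
Definition feasible nu a := nonneg_orthant nu /\ simplex a.
Definition Wopt y :=
  inf [set obj y nu a | nu in @nonneg_orthant R n.+1 & a in @simplex R m.+1].
Definition minimizer y nu a :=
  feasible nu a /\ forall nu' a', feasible nu' a' -> obj y nu a <= obj y nu' a'.

Lemma comb_coord a j : comb a 0 j = \sum_(i < m.+1) a 0 i * q i 0 j.
Proof. by rewrite summxE; apply: eq_bigr => i _; rewrite mxE. Qed.

Lemma comb_delta k : comb (delta_mx 0 k) = q k.
Proof.
rewrite /comb (bigD1 k) //= big1 => [|i ik]; rewrite mxE !eqxx /=.
  by rewrite scale1r addr0.
by rewrite (negbTE ik) scale0r.
Qed.

Lemma cost_delta k : cost (delta_mx 0 k) = c k.
Proof.
rewrite /cost (bigD1 k) //= big1 => [|i ik]; rewrite mxE !eqxx /=.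
  by rewrite mul1r addr0.
by rewrite (negbTE ik) mul0r.
Qed.

Lemma comb_lerp a a' t : comb (a + t *: (a' - a)) = comb a + t *: (comb a' - comb a).
Proof.
rewrite /comb [in RHS]scalerBr !scaler_sumr -sumrB -big_split /=; apply: eq_bigr => i _.
by rewrite !mxE !scalerA -scalerBl -scalerDl mulrBr.
Qed.

Lemma resid_lerp y nu a nu' a' t :
  resid y (nu + t *: (nu' - nu)) (a + t *: (a' - a)) - resid y nu a
  = t *: (resid y nu' a' - resid y nu a).
Proof. by rewrite /resid comb_lerp; apply/rowP => j; rewrite !mxE; ring. Qed.

Lemma cost_lerp a a' t : cost (a + t *: (a' - a)) - cost a = t * (cost a' - cost a).
Proof.
by rewrite /cost -!sumrB mulr_sumr; apply: eq_bigr => i _; rewrite !mxE; ring.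
Qed.

Lemma feasible_lerp nu a nu' a' t : feasible nu a -> feasible nu' a' ->
  0 <= t -> t <= 1 -> feasible (nu + t *: (nu' - nu)) (a + t *: (a' - a)).
Proof.
move=> [nu_ge0 [a_ge0 a_sum]] [nu'_ge0 [a'_ge0 a'_sum]] t_ge0 t_le1.
split; [|split].
- by move=> j; rewrite !mxE; have := nu_ge0 j; have := nu'_ge0 j; nra.
- by move=> i; rewrite !mxE; have := a_ge0 i; have := a'_ge0 i; nra.
- under eq_bigr do rewrite !mxE.
  by rewrite big_split /= -mulr_sumr sumrB a_sum a'_sum subrr mulr0 addr0.
Qed.

Lemma obj_expand y nu a y' nu' a' :
  obj y' nu' a' = obj y nu a
    + (L * dotv (resid y nu a) (resid y' nu' a' - resid y nu a) + (cost a' - cost a))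
    + L / 2 * dotv (resid y' nu' a' - resid y nu a) (resid y' nu' a' - resid y nu a).
Proof.
rewrite /obj; set v := resid y nu a; set d := resid y' nu' a' - v.
by rewrite -[resid y' nu' a'](subrK v) -/d [d + v]addrC dotvDD; field.
Qed.

Lemma minimizer_first_order y nu a nu' a' : minimizer y nu a -> feasible nu' a' ->
  0 <= L * dotv (resid y nu a) (resid y nu' a' - resid y nu a) + (cost a' - cost a).
Proof.
move=> [feas_nu nu_min] feas'; set d := resid y nu' a' - resid y nu a.
have L2_ge0 : 0 <= L / 2 by rewrite divr_ge0 // ltW.
apply: (first_order_ge0 (mulr_ge0 L2_ge0 (dotvv_ge0 d))) => t t_gt0 t_le1.
have := nu_min _ _ (feasible_lerp feas_nu feas' (ltW t_gt0) t_le1).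
rewrite (obj_expand y nu a y (nu + t *: (nu' - nu)) (a + t *: (a' - a))).
rewrite resid_lerp cost_lerp -/d dotvZl !dotvZr.
lra.
Qed.


Definition nu_opt y a : 'rV[R]_n.+1 := \row_j Num.max 0 (comb a 0 j - y 0 j).

Lemma nu_opt_ge0 y a : nonneg_orthant (nu_opt y a).
Proof. by move=> j; rewrite mxE le_max lexx. Qed.

Lemma resid_nu_opt y a j : resid y (nu_opt y a) a 0 j = Num.max (y 0 j - comb a 0 j) 0.
Proof.
rewrite !mxE !maxEle; case: ifPn => h1; case: ifPn => h2; rewrite -?ltNge in h1 h2; lra.
Qed.

Lemma obj_nu_opt_le y nu a : nonneg_orthant nu -> obj y (nu_opt y a) a <= obj y nu a.
Proof.
move=> nu_ge0; rewrite /obj lerD2r ler_pM2l ?divr_gt0 //.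
apply: ler_sum => j _; rewrite resid_nu_opt.
have -> : resid y nu a 0 j = (y 0 j - comb a 0 j) + nu 0 j by rewrite !mxE; ring.
have := nu_ge0 j; set u := y 0 j - comb a 0 j => nu_ge0j.
case: (lerP u 0) => [u_le0|u_gt0]; first by rewrite mul0r -expr2 sqr_ge0.
nra.
Qed.


Lemma continuous_obj_nu_opt y : continuous (fun a => obj y (nu_opt y a) a).
Proof.
have comb_cont j : continuous (fun a => comb a 0 j).
  under eq_fun do rewrite comb_coord.
  apply: continuous_big => [|i _]; first exact: add_continuous.
  by move=> a; apply: continuousM; [exact: coord_continuous | exact: cst_continuous].
have resid_cont j : continuous (fun a => resid y (nu_opt y a) a 0 j).
  under eq_fun do rewrite resid_nu_opt.
  move=> a; apply: (continuous_max (f := fun a => y 0 j - comb a 0 j) (g := cst 0)).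
    by apply: continuousB; [exact: cst_continuous | exact: comb_cont].
  exact: cst_continuous.
have sq_cont : continuous (fun a => dotv (resid y (nu_opt y a) a) (resid y (nu_opt y a) a)).
  apply: continuous_big => [|j _]; first exact: add_continuous.
  by move=> a; apply: continuousM; exact: resid_cont.
have cost_cont : continuous cost.
  apply: continuous_big => [|i _]; first exact: add_continuous.
  by move=> a; apply: continuousM; [exact: coord_continuous | exact: cst_continuous].
move=> a; apply: (continuousD (g := cost)); last exact: cost_cont.
by apply: continuousM; [exact: cst_continuous | exact: sq_cont].
Qed.

Lemma minimizer_exists y : exists p : 'rV[R]_n.+1 * 'rV[R]_m.+1, minimizer y p.1 p.2.
Proof.
have [a a_simplex a_min] := simplex_argmin (continuous_obj_nu_opt (y := y)).
exists (nu_opt y a, a); split => [|nu' a' [nu'_ge0 a'_simplex]].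
  by split => //; exact: nu_opt_ge0.
exact: le_trans (a_min _ a'_simplex) (obj_nu_opt_le _ _ nu'_ge0).
Qed.

Definition argmin y := xget (0, 0) (fun p => minimizer y p.1 p.2).

Lemma argminP y : minimizer y (argmin y).1 (argmin y).2.
Proof. exact: (xgetPex (0, 0) (minimizer_exists y)). Qed.

Definition Gopt y := L *: resid y (argmin y).1 (argmin y).2.

Lemma Wopt_le y nu a : feasible nu a -> Wopt y <= obj y nu a.
Proof.
move=> [nu_ge0 a_simplex]; have [_ argmin_min] := argminP y.
apply: ge_inf; last by exists nu => //; exists a.
exists (obj y (argmin y).1 (argmin y).2) => _ [nu' nu'_ge0 [a' a'_simplex <-]].
exact: argmin_min.
Qed.

Lemma Wopt_ge y t : (forall nu a, feasible nu a -> t <= obj y nu a) -> t <= Wopt y.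
Proof.
move=> t_lb; apply: lb_le_inf; last by move=> _ [nu nu_ge0 [a a_simplex <-]]; apply: t_lb.
have [[nu_ge0 a_simplex] _] := argminP y.
by exists (obj y (argmin y).1 (argmin y).2); exists (argmin y).1 => //; exists (argmin y).2.
Qed.

Lemma Wopt_minimizer y nu a : minimizer y nu a -> Wopt y = obj y nu a.
Proof.
by move=> [feas nu_min]; apply/le_anti/andP; split; [exact: Wopt_le | exact: Wopt_ge].
Qed.

(* The objective is strictly convex in the residual, so all minimizers share it. *)
Lemma minimizer_resid_unique y nu a nu' a' :
  minimizer y nu a -> minimizer y nu' a' -> resid y nu' a' = resid y nu a.
Proof.
move=> nu_min nu'_min; set d := resid y nu' a' - resid y nu a.
have obj_eq : obj y nu' a' = obj y nu a.
  apply/le_anti/andP; split; first exact: nu'_min.2 _ _ nu_min.1.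
  exact: nu_min.2 _ _ nu'_min.1.
have := minimizer_first_order nu_min nu'_min.1.
have := obj_expand y nu a y nu' a'; rewrite obj_eq -/d => expand first_order.
have dd_le0 : dotv d d <= 0.
  have : L / 2 * dotv d d <= 0 by lra.
  by rewrite pmulr_rle0 // divr_gt0.
by apply/eqP; rewrite -subr_eq0 -/d; apply/eqP/dotvv_eq0/le_anti; rewrite dd_le0 dotvv_ge0.
Qed.

Lemma Gopt_minimizer y nu a : minimizer y nu a -> Gopt y = L *: resid y nu a.
Proof. by move=> nu_min; rewrite /Gopt (minimizer_resid_unique nu_min (argminP y)). Qed.

Lemma Wopt_lower y z : Wopt y + dotv (Gopt y) (z - y) <= Wopt z.
Proof.
have := argminP y; rewrite /Gopt; case: (argmin y) => nu a /= nu_min.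
rewrite (Wopt_minimizer nu_min) dotvZl; apply: Wopt_ge => nu' a' feas'.
rewrite (obj_expand y nu a z nu' a').
have -> : resid z nu' a' - resid y nu a = (z - y) + (resid y nu' a' - resid y nu a).
  by rewrite /resid; apply/rowP => j; rewrite !mxE; ring.
rewrite [dotv _ (z - y + _)]linearD /=; set e := z - y + _.
have L2_ge0 : 0 <= L / 2 by rewrite divr_ge0 // ltW.
have := minimizer_first_order nu_min feas'; have := mulr_ge0 L2_ge0 (dotvv_ge0 e).
lra.
Qed.

Lemma Wopt_upper y z :
  Wopt z <= Wopt y + dotv (Gopt y) (z - y) + L / 2 * dotv (z - y) (z - y).
Proof.
have := argminP y; rewrite /Gopt; case: (argmin y) => nu a /= nu_min.
rewrite (Wopt_minimizer nu_min); apply: le_trans (Wopt_le z nu_min.1) _.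
rewrite (obj_expand y nu a z nu a).
have -> : resid z nu a - resid y nu a = z - y.
  by rewrite /resid; apply/rowP => j; rewrite !mxE; ring.
by rewrite subrr addr0 dotvZl.
Qed.

Lemma dotv_comb w a : dotv w (comb a) = \sum_(i < m.+1) a 0 i * dotv w (q i).
Proof. by rewrite /comb (linear_sum (dotv w)) /=; apply: eq_bigr => i _; rewrite dotvZr. Qed.

(* A weak-duality bound: [w] plays the role of [L] times the residual. *)
Lemma obj_ge_certificate y w t :
  (forall i, t <= dotv w (y - q i) + c i - dotv w w / (2 * L)) ->
  (forall nu, nonneg_orthant nu -> 0 <= dotv w nu) ->
  forall nu a, feasible nu a -> t <= obj y nu a.
Proof.
move=> cert w_ge0 nu a [nu_ge0 [a_ge0 a_sum]].
have avg : t <= dotv w y - dotv w (comb a) + cost a - dotv w w / (2 * L).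
  have <- : \sum_i a 0 i * (dotv w (y - q i) + c i - dotv w w / (2 * L)) =
      dotv w y - dotv w (comb a) + cost a - dotv w w / (2 * L).
    transitivity (\sum_i a 0 i * (dotv w y - dotv w w / (2 * L))
        - \sum_i a 0 i * dotv w (q i) + \sum_i a 0 i * c i).
      by rewrite -sumrB -big_split /=; apply: eq_bigr => i _; rewrite linearB /=; ring.
    by rewrite -mulr_suml a_sum mul1r dotv_comb /cost; ring.
  have -> : t = \sum_i a 0 i * t by rewrite -mulr_suml a_sum mul1r.
  apply: ler_sum => i _.
  by apply: ler_wpM2l; [exact: a_ge0 | exact: cert].
have := dotv_le_quadratic w (resid y nu a) L_gt0.
have : dotv w (resid y nu a) = dotv w y + dotv w nu - dotv w (comb a).
  by rewrite /resid linearB linearD.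
have := w_ge0 nu nu_ge0.
rewrite /obj; lra.
Qed.

End QuadraticProgram.

Section Interpolation.
Variables (R : realType) (n m : nat) (L : R).
Variables (x g : 'I_m.+1 -> 'rV[R]_n.+1) (f : 'I_m.+1 -> R).
Hypothesis L_gt0 : 0 < L.
Hypothesis interpolating : forall i j,
  f i + dotv (g i) (x j - x i) + dotv (g j - g i) (g j - g i) / (2 * L) <= f j.
Hypothesis g_ge0 : forall i j, 0 <= g i 0 j.

Local Notation q := (fun i => x i - L^-1 *: g i).
Local Notation c := (fun i => f i - (2 * L)^-1 * dotv (g i) (g i)).

Lemma resid_vertex k : resid q (x k) 0 (delta_mx 0 k) = L^-1 *: g k.
Proof. by rewrite /resid comb_delta addr0 opprB addrC subrK. Qed.

Lemma obj_vertex k : obj L q c (x k) 0 (delta_mx 0 k) = f k.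
Proof. by rewrite /obj cost_delta resid_vertex dotvZl dotvZr; field; rewrite gt_eqF. Qed.

Lemma vertex_minimizer k : minimizer L q c (x k) 0 (delta_mx 0 k).
Proof.
split=> [|nu a feas]; first by split; [move=> j; rewrite mxE | exact: simplex_delta].
rewrite obj_vertex.
apply: (obj_ge_certificate (w := g k) L_gt0 _ _ feas) => [i|nu' nu'_ge0].
  have := interpolating k i.
  rewrite !linearB /= dotvZr !dotvBl [dotv (g i) (g k)]dotvC.
  have -> : L^-1 = 2 * (2 * L)^-1 by field; rewrite gt_eqF.
  lra.
by apply: sumr_ge0 => j _; apply: mulr_ge0; [exact: g_ge0 | exact: nu'_ge0].
Qed.

Lemma Wopt_vertex k : Wopt L q c (x k) = f k.
Proof. by rewrite (Wopt_minimizer L_gt0 (vertex_minimizer k)) obj_vertex. Qed.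

Lemma Gopt_vertex k : Gopt L q c (x k) = g k.
Proof.
rewrite (Gopt_minimizer L_gt0 (vertex_minimizer k)) resid_vertex.
by rewrite scalerA mulfV ?gt_eqF ?scale1r.
Qed.

End Interpolation.

Section ZetaData.
Variables (R : realType) (N : nat) (L : R) (zeta : nat -> R).
Hypothesis L_gt0 : 0 < L.
Hypothesis zeta_decr : forall k, (k <= N.+1)%N -> zeta k.+1 < zeta k.
Hypothesis zeta_last : zeta N.+2 = 0.

Local Notation s k := (Num.sqrt (zeta k - zeta k.+1)).

Lemma zeta_le a b : (a <= b)%N -> (b <= N.+2)%N -> zeta b <= zeta a.
Proof.
elim: b => [|b IH] ab bN; first by rewrite leqn0 in ab; rewrite (eqP ab).
rewrite leq_eqVlt ltnS in ab; case/orP: ab => [/eqP -> //|ab].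
exact: le_trans (ltW (zeta_decr bN)) (IH ab (ltnW bN)).
Qed.

Lemma zeta_ge0 k : (k <= N.+2)%N -> 0 <= zeta k.
Proof. by move=> kN; rewrite -zeta_last; apply: zeta_le. Qed.

Lemma sqrt_gap_gt0 k : (k <= N.+1)%N -> 0 < s k.
Proof. by move=> kN; rewrite sqrtr_gt0 subr_gt0 zeta_decr. Qed.

Lemma sqr_sqrt_gap k : (k <= N.+1)%N -> s k * s k = zeta k - zeta k.+1.
Proof. by move=> kN; rewrite -expr2 sqr_sqrtr // subr_ge0 ltW // zeta_decr. Qed.

Lemma dotv_gpt i v :
  dotv (gpt N L zeta i) v = if (i <= N)%N then L * s i * v 0 (inord i) else 0.
Proof.
case: ifP => iN; last by rewrite /dotv big1 // => j _; rewrite mxE iN mul0r.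
rewrite /dotv (bigD1 (inord i)) //= big1 ?addr0 => [|j ji].
  by rewrite mxE iN inordK ?ltnS // eqxx.
rewrite mxE iN /=; case: eqP => [ij|]; last by rewrite mul0r.
by rewrite -(inj_eq val_inj) /= inordK ?ltnS // ij eqxx in ji.
Qed.

Lemma dotv_gpt_xpt i j : (j <= N.+1)%N ->
  dotv (gpt N L zeta i) (xpt N zeta j) =
    if (i < j)%N then - (L * (zeta i - zeta j.+1)) else 0.
Proof.
move=> jN; rewrite dotv_gpt; case: (leqP i N) => iN; last first.
  by rewrite ltnNge (leq_trans jN iN).
rewrite mxE inordK ?ltnS //; case: ifP => ij; last by rewrite mulr0.
by field; rewrite gt_eqF // sqrt_gap_gt0 // (leqW iN).
Qed.

Lemma dotv_gpt_gpt i j : dotv (gpt N L zeta i) (gpt N L zeta j) =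
  L ^+ 2 * (if (i <= N)%N && (i == j) then zeta i - zeta i.+1 else 0).
Proof.
rewrite dotv_gpt; case: (leqP i N) => iN /=; last by rewrite mulr0.
rewrite mxE inordK ?ltnS //; case: eqVneq => [<-|ij]; last by rewrite andbF !mulr0.
by rewrite iN mulrACA sqr_sqrt_gap ?(leqW iN) // expr2.
Qed.

Lemma gpt_ge0 i j : 0 <= gpt N L zeta i 0 j.
Proof. by rewrite mxE; case: ifP => // _; rewrite mulr_ge0 ?sqrtr_ge0 ?ltW. Qed.

Lemma interpolation_ineq i j : (i <= N.+1)%N -> (j <= N.+1)%N ->
  fval N L zeta i + dotv (gpt N L zeta i) (xpt N zeta j - xpt N zeta i)
  + dotv (gpt N L zeta j - gpt N L zeta i) (gpt N L zeta j - gpt N L zeta i) / (2 * L)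
  <= fval N L zeta j.
Proof.
move=> iN jN.
have sq_div a b d : (L ^+ 2 * a - 2 * (L ^+ 2 * b) + L ^+ 2 * d) / (2 * L)
    = L / 2 * (a - 2 * b + d) by field; rewrite gt_eqF.
rewrite linearB /= dotvBB !dotv_gpt_gpt sq_div !dotv_gpt_xpt // ltnn !eqxx !andbT /fval.
case: (ltngtP i j) => [ij|ji|<-]; rewrite ?andbF ?andbT /=; last by case: (i <= N)%N; lra.
- have -> : (i <= N)%N by lia.
  case: (leqP j N) => jN' /=; first by lra.
  have -> : j = N.+1 by lia.
  rewrite zeta_last; lra.
- have -> : (j <= N)%N by lia.
  case: (leqP i N) => iN' /=.
    by have := zeta_le ji (leqW iN); have := L_gt0; nra.
  by have := @zeta_ge0 j.+1 jN; have := L_gt0; nra.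
Qed.

End ZetaData.

Theorem corollary1 (R : realType) (N : nat) (L : R) (zeta : nat -> R)
  (hN : (0 < N)%N) (hL : 0 < L)
  (hzeta : forall k : nat, (k <= N.+1)%N -> zeta k.+1 < zeta k)
  (hzeta0 : zeta N.+2 = 0) :
  convexf (@Wfun R N L zeta) /\
  exists G : 'rV[R]_N.+1 -> 'rV[R]_N.+1,
    (forall y, is_gradient (@Wfun R N L zeta) y (G y)) /\
    (forall y z, enorm (G y - G z) <= L * enorm (y - z)) /\
    (forall i : nat, (i <= N.+1)%N ->
       @Wfun R N L zeta (@xpt R N zeta i) = @fval R N L zeta i /\
       G (@xpt R N zeta i) = @gpt R N L zeta i).
Proof.
pose x (k : 'I_N.+2) := xpt N zeta k; pose g (k : 'I_N.+2) := gpt N L zeta k.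
pose f (k : 'I_N.+2) := fval N L zeta k.
pose q k := x k - L^-1 *: g k; pose c k := f k - (2 * L)^-1 * dotv (g k) (g k).
have interp i j :
    f i + dotv (g i) (x j - x i) + dotv (g j - g i) (g j - g i) / (2 * L) <= f j.
  exact (interpolation_ineq hL hzeta hzeta0 (ltn_ord i) (ltn_ord j)).
have g_ge0 k j : 0 <= g k 0 j by exact: gpt_ge0.
have -> : Wfun L zeta = Wopt L q c by [].
have lower := Wopt_lower q c hL; have upper := Wopt_upper q c hL.
split; first exact: convexf_of_lower lower.
exists (Gopt L q c); split; first exact: gradient_of_bounds hL lower upper.
split; first exact: lipschitz_of_bounds hL lower upper.
move=> i iN; rewrite -(@inordK N.+1 i iN).
by split; [exact: Wopt_vertex hL interp g_ge0 _ | exact: Gopt_vertex hL interp g_ge0 _].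
Qed.
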